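(* Let $H=E+D$ and $K=E'+D'$ be closed additive subgroups of $\mathbb{R}^{n}$ (with decompositions as in the context) and let $f:H\to K$ be a homomorphism of closed additive groups. (i) If $f$ is injective, then $f:H\to f(H)$ is an isomorphism of closed additive groups. (ii) If $f$ is surjective and $F$ is a closed additive subgroup which is a supplement of $\mathrm{Ker}(f)$ in $H$ with defect $0$, then the restriction $f_{|F}:F\to K$ is an isomorphism of closed additive groups; moreover $\Re(\widetilde{\mathrm{dim}}(K))=\Re(\widetilde{\mathrm{dim}}(H))-\Re(\widetilde{\mathrm{dim}}(\mathrm{Ker}(f)))$.
   Context: Every closed additive subgroup $G$ of $\mathbb{R}^n$ can be written $G=E+D$ with $E$ a vector subspace and $D$ a discrete additive subgroup with $E\cap\mathrm{vect}(D)=\{0\}$ ($\mathrm{vect}$ = real span). For closed subgroups with such decompositions $G_1=E_1+D_1$, $G_2=E_2+D_2$, a map $g:G_1\to G_2$ is a homomorphism of closed additive groups if there are a linear map $g_1:E_1\to E_2$ and a group homomorphism $g_2:D_1\to D_2$ with $g(\lambda x+py)=\lambda g_1(x)+pg_2(y)$ for all $\lambda\in\mathbb{R}$, $p\in\mathbb{Z}$, $x\in E_1$, $y\in D_1$; it is an isomorphism of closed additive groups if it is invertible (with inverse of the same kind). Complex dimension: for an additive subgroup $G$, $\widetilde{\mathrm{dim}}(G):=p+i(q-p)$ with $p=\max\{\dim V: V\text{ a vector subspace},\ V\subset G\}$, $q=\dim\mathrm{vect}(G)$. A subgroup $F\subset H$ is a supplement of $\mathrm{Ker}(f)$ in $H$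 with defect $0$ if $F+\mathrm{Ker}(f)=H$, $\Re(\widetilde{\mathrm{dim}}(F\cap\mathrm{Ker}(f)))=0$ and $\Im(\widetilde{\mathrm{dim}}(F\cap\mathrm{Ker}(f)))=0$. *)

From HB Require Import structures.
From mathcomp Require Import all_boot all_order all_algebra.
From mathcomp Require Import all_classical all_reals all_analysis.

Set Implicit Arguments.
Unset Strict Implicit.
Unset Printing Implicit Defensive.

Import Order.TTheory GRing.Theory Num.Theory.
Import numFieldNormedType.Exports.
Local Open Scope classical_set_scope.
Local Open Scope ring_scope.

Section Defs.
Variables (R : realType) (n : nat).
Local Notation V := 'rV[R]_n.

Definition is_subgroup (G : set V) : Prop :=
  G 0 /\ (forall x y, G x -> G y -> G (x - y)).

Definition closed_subgroup (G : set V) : Prop := is_subgroup G /\ closed G.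

Definition is_vsub (E : set V) : Prop :=
  E 0 /\ (forall (a : R) x y, E x -> E y -> E (a *: x + y)).

Definition vect (S : set V) : set V :=
  [set x | forall W, is_vsub W -> S `<=` W -> W x].

Definition discrete_set (D : set V) : Prop :=
  forall x, D x -> exists U, nbhs x U /\ D `&` U = [set x].

Definition setsum (A B : set V) : set V :=
  [set z | exists x y, A x /\ B y /\ z = x + y].

Definition is_decomp (G E D : set V) : Prop :=
  [/\ is_vsub E, is_subgroup D, discrete_set D, G = setsum E D
    & E `&` vect D = [set 0]].

Definition cag_hom (E1 D1 E2 D2 : set V) (g : V -> V) : Prop :=
  exists g1 g2 : V -> V,
    [/\ (forall x, E1 x -> E2 (g1 x)),
        (forall (a b : R) x y, E1 x -> E1 y ->
           g1 (a *: x + b *: y) = a *: g1 x + b *: g1 y),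
        (forall y, D1 y -> D2 (g2 y)),
        (forall x y, D1 x -> D1 y -> g2 (x + y) = g2 x + g2 y)
      & (forall (l : R) (p : int) x y, E1 x -> D1 y ->
           g (l *: x + y *~ p) = l *: g1 x + (g2 y) *~ p)].

Definition cag_iso (G1 E1 D1 G2 E2 D2 : set V) (g : V -> V) : Prop :=
  cag_hom E1 D1 E2 D2 g /\
  exists h : V -> V,
    [/\ cag_hom E2 D2 E1 D1 h,
        (forall x, G1 x -> G2 (g x)),
        (forall y, G2 y -> G1 (h y)),
        (forall x, G1 x -> h (g x) = x)
      & (forall y, G2 y -> g (h y) = y)].

Definition vdim (W : set V) : nat :=
  xget 0%N [set d | exists M : 'M[R]_n,
    (forall v, W v <-> (v <= M)%MS) /\ \rank M = d].

Definition cdim_p (G : set V) : nat :=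
  xget 0%N [set d | (exists W, [/\ is_vsub W, W `<=` G & vdim W = d]) /\
                    (forall W, is_vsub W -> W `<=` G -> (vdim W <= d)%N)].

Definition cdim_q (G : set V) : nat := vdim (vect G).

(* complex dimension p + i (q - p), encoded as (real part, imaginary part) *)
Definition cdim (G : set V) : int * int :=
  ((cdim_p G)%:Z, (cdim_q G)%:Z - (cdim_p G)%:Z).
Definition cdim_Re (G : set V) : int := (cdim G).1.
Definition cdim_Im (G : set V) : int := (cdim G).2.

Definition kerH (H : set V) (f : V -> V) : set V := [set x | H x /\ f x = 0].

Definition supplement_defect0 (H : set V) (f : V -> V) (F : set V) : Prop :=
  [/\ F `<=` H, setsum F (kerH H f) = H,
      cdim_Re (F `&` kerH H f) = 0 & cdim_Im (F `&` kerH H f) = 0].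

End Defs.

From HB Require Import structures.
From mathcomp Require Import all_boot all_order all_algebra.
From mathcomp Require Import all_classical all_reals all_analysis.
From mathcomp Require Import lra.
Import Order.TTheory GRing.Theory Num.Theory.
Import numFieldNormedType.Exports.
Local Open Scope classical_set_scope.
Local Open Scope ring_scope.
Set Implicit Arguments. Unset Strict Implicit.

(* The decomposition [x + d] of a point of [E' + D'] with [x] in [E'] and [d] in [vect D'] is
   unique, so [f (x + d) = g1 x + g2 d] separates the linear and the discrete parts of [f], and
   [f (H) = g1 (E) + g2 (D)] is again such a decomposition. It is closed: near a limit point the
   discreteness of [D'] freezes the [D']-component, and what remains converges in the closed
   subspace [g1 (E)]. An injective homomorphism of this kind is inverted on its image by one of
   the same kind.
   For (ii), defect 0 makes [f] injective on [F], and [F] splits as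
   [(F `&` E) + [set h | F h /\ D' (f h)]]: an element of [F] mapped into [E'] is infinitely
   divisible in [F], hence lies in [E], and [F `&` E] is a vector space because [F] is closed.
   The largest subspace contained in [E + D] is [E], so the real part of the complex dimension
   is [dim E], and the formula is rank-nullity for [g1] on [E], whose image is [E']. *)

Section Subspaces.
Variables (R : realType) (n : nat).
Local Notation V := 'rV[R]_n.
Implicit Types (W E D G S : set V) (x y v d : V).

Lemma vsub0 W : is_vsub W -> W 0. Proof. by case. Qed.

Lemma vsubD W x y : is_vsub W -> W x -> W y -> W (x + y).
Proof. by case=> _ h Wx Wy; have := h 1 x y Wx Wy; rewrite scale1r. Qed.

Lemma vsubZ W a x : is_vsub W -> W x -> W (a *: x).
Proof. by case=> W0 h Wx; have := h a x 0 Wx W0; rewrite addr0. Qed.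

Lemma vsubB W x y : is_vsub W -> W x -> W y -> W (x - y).
Proof. by move=> hW Wx Wy; rewrite -scaleN1r; apply: vsubD => //; apply: vsubZ. Qed.

Lemma subgroup0 G : is_subgroup G -> G 0. Proof. by case. Qed.

Lemma subgroupB G x y : is_subgroup G -> G x -> G y -> G (x - y).
Proof. by case=> _; apply. Qed.

Lemma subgroupN G x : is_subgroup G -> G x -> G (- x).
Proof. by move=> hG Gx; rewrite -sub0r; apply: subgroupB => //; apply: subgroup0. Qed.

Lemma subgroupD G x y : is_subgroup G -> G x -> G y -> G (x + y).
Proof. by move=> hG Gx Gy; rewrite -[y]opprK; apply: subgroupB => //; apply: subgroupN. Qed.

Lemma subgroupMn G x m : is_subgroup G -> G x -> G (x *+ m).
Proof.
move=> hG Gx; elim: m => [|m IH]; first by rewrite mulr0n; apply: subgroup0.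
by rewrite mulrS; apply: subgroupD.
Qed.

Lemma subgroupMz G x p : is_subgroup G -> G x -> G (x *~ p).
Proof.
move=> hG Gx; case: p => m; first exact: subgroupMn.
by rewrite NegzE mulrNz; apply: subgroupN => //; apply: subgroupMn.
Qed.

Lemma vsub_subgroup W : is_vsub W -> is_subgroup W.
Proof. by move=> hW; split; [apply: vsub0 | move=> x y; apply: vsubB]. Qed.

Lemma setsum_vsub E E' : is_vsub E -> is_vsub E' -> is_vsub (setsum E E').
Proof.
move=> hE hE'; split; first by exists 0, 0; rewrite addr0; do !split; apply: vsub0.
move=> a _ _ [x [y [Ex [E'y ->]]]] [x' [y' [Ex' [E'y' ->]]]].
exists (a *: x + x'), (a *: y + y'); rewrite scalerDr addrACA.
by split; [|split]; [case: hE => _; apply | case: hE' => _; apply |].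
Qed.

Lemma vect_vsub S : is_vsub (vect S).
Proof.
split; first by move=> W [].
by move=> a x y Sx Sy W hW SW; case: (hW) => _; apply; [apply: Sx | apply: Sy].
Qed.

Lemma sub_vect S : S `<=` vect S. Proof. by move=> x Sx W _; apply. Qed.

Lemma vect_min S W : is_vsub W -> S `<=` W -> vect S `<=` W.
Proof. by move=> hW SW x; apply. Qed.

Lemma vectS S S' : S `<=` S' -> vect S `<=` vect S'.
Proof. by move=> SS' x Sx W hW S'W; apply: Sx => // y /SS' /S'W. Qed.

Lemma direct_sum_uniq E D x d x' d' : is_vsub E -> E `&` vect D = [set 0] ->
  E x -> vect D d -> E x' -> vect D d' -> x + d = x' + d' -> x = x' /\ d = d'.
Proof.
move=> hE ED Ex Dd Ex' Dd' e.
have dx : x - x' = d' - d by rewrite -(addrK d x) e addrAC [x' + d']addrC addrK.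
have : (E `&` vect D) (x - x').
  by split; [apply: vsubB | rewrite dx; apply: (vsubB (vect_vsub D))].
rewrite ED => /= x0; split; apply/eqP; first by rewrite -subr_eq0 x0.
by rewrite eq_sym -subr_eq0 -dx x0.
Qed.

End Subspaces.

Section RowSpaces.
Variables (R : realType) (n : nat).
Local Notation V := 'rV[R]_n.
Implicit Types (W E D S : set V).

Lemma vsub_rowspace W : is_vsub W -> exists M : 'M[R]_n, forall v, W v <-> (v <= M)%MS.
Proof.
move=> hW.
pose P (r : nat) := `[< exists M : 'M[R]_n, (forall v : V, (v <= M)%MS -> W v) /\ \rank M = r >].
have P0 : P 0%N.
  apply/asboolP; exists 0; split; last exact: mxrank0.
  by move=> v; rewrite submx0 => /eqP ->; apply: vsub0.
have Pn r : P r -> (r <= n)%N by move=> /asboolP [M [_ <-]]; apply: rank_leq_col.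
have [r /asboolP [M [MW rM]] maxr] := ex_maxnP (ex_intro _ 0%N P0) Pn.
exists M => v; split => [Wv|]; last exact: MW.
apply: contrapT => vM.
have MvW w : (w <= M + v)%MS -> W w.
  move=> /sub_addsmxP [[u1 u2] /= ->]; apply: vsubD => //; first exact/MW/submxMl.
  by rewrite [u2]mx11_scalar mul_scalar_mx; apply: vsubZ.
have : (\rank (M + v)%MS <= r)%N by apply: maxr; apply/asboolP; exists (M + v)%MS.
rewrite -rM (geq_leqif (mxrank_leqif_sup (addsmxSl M v))) => Mv.
exact/vM/(submx_trans (addsmxSr M v) Mv).
Qed.

Lemma vdim_rowspace W (M : 'M[R]_n) : (forall v, W v <-> (v <= M)%MS) -> vdim W = \rank M.
Proof.
move=> WM; apply: xget_unique; first by exists M.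
move=> d [M' [WM' <-]]; apply/eqmx_rank/andP; split; apply/row_subP => i.
  by apply/WM/WM'; exact: row_sub.
by apply/WM'/WM; exact: row_sub.
Qed.

Lemma vdimS W1 W2 : is_vsub W1 -> is_vsub W2 -> W1 `<=` W2 -> (vdim W1 <= vdim W2)%N.
Proof.
move=> /vsub_rowspace [M1 WM1] /vsub_rowspace [M2 WM2] W12.
rewrite (vdim_rowspace WM1) (vdim_rowspace WM2); apply/mxrankS/row_subP => i.
by apply/WM2/W12/WM1; exact: row_sub.
Qed.

Lemma vdim_rank_nullity E (g : V -> V) : is_vsub E ->
  (forall (a b : R) x y, E x -> E y -> g (a *: x + b *: y) = a *: g x + b *: g y) ->
  vdim E = (vdim (g @` E) + vdim (E `&` [set x | g x = 0%R]))%N.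
Proof.
move=> hE glin; have [ME EM] := vsub_rowspace hE.
have ErowM i : E (row i ME) by apply/EM; exact: row_sub.
pose G := \matrix_i g (row i ME).
have gME (u : V) : g (u *m ME) = u *m G.
  rewrite !mulmx_sum_row.
  suff /(_ (index_enum _)) [] : forall s : seq 'I_n,
      E (\sum_(i <- s) u 0 i *: row i ME) /\
      g (\sum_(i <- s) u 0 i *: row i ME) = \sum_(i <- s) u 0 i *: row i G by [].
  elim => [|i s [Es gs]].
    rewrite !big_nil; split; first exact: vsub0.
    by have := glin 0 0 0 0 (vsub0 hE) (vsub0 hE); rewrite !scale0r addr0.
  rewrite !big_cons rowK; split; first by apply: vsubD => //; apply: vsubZ.
  by have := glin (u 0 i) 1 _ _ (ErowM i) Es; rewrite !scale1r gs.
pose A := pinvmx ME *m G.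
have gA v : E v -> g v = v *m A.
  by move=> /EM vE; rewrite -[in LHS](mulmxKpV vE) gME /A [RHS]mulmxA.
have imgA w : (g @` E) w <-> (w <= ME *m A)%MS.
  split=> [[v Ev <-]|/submxP [u ->]].
    by have /submxP [u ->] := (EM v).1 Ev; rewrite gA -?mulmxA ?submxMl //; apply/EM/submxMl.
  by exists (u *m ME); [apply/EM/submxMl | rewrite gA ?mulmxA //; apply/EM/submxMl].
have kerA w : (E `&` [set x | g x = 0]) w <-> (w <= ME :&: kermx A)%MS.
  rewrite sub_capmx sub_kermx; split=> [[Ew /= gw]|/andP [wE /eqP wA]].
    by apply/andP; split; [apply/EM | rewrite -gA // gw].
  by have Ew := (EM w).2 wE; split => //=; rewrite gA.
by rewrite (vdim_rowspace EM) (vdim_rowspace imgA) (vdim_rowspace kerA) mxrank_mul_ker.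
Qed.

Lemma mulmx_continuous (P : 'M[R]_n) : continuous (fun v : V => v *m P).
Proof.
have sum_cont (s : seq 'I_n) :
    continuous (fun v : V => \sum_(i <- s) v 0 i *: row i P).
  elim: s => [|i s IHs].
    by under eq_fun do rewrite big_nil; exact: cst_continuous.
  under eq_fun do rewrite big_cons.
  move=> v; apply: continuousD (IHs v); apply: continuousZr_tmp; exact: coord_continuous.
by under eq_fun do rewrite mulmx_sum_row; exact: sum_cont.
Qed.

Lemma vsub_closed W : is_vsub W -> closed W.
Proof.
move=> /vsub_rowspace [M WM].
have -> : W = (fun v : V => v *m cokermx M) @^-1` [set 0].
  apply/seteqP; split=> v /=; first by move/WM; rewrite submxE => /eqP.
  by move=> vM0; apply/WM; rewrite submxE vM0.
apply: preimage_closed; first by move=> v _; apply: mulmx_continuous.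
exact/accessible_closed_set1/hausdorff_accessible/norm_hausdorff.
Qed.

Lemma direct_sum_projector E D : is_vsub E -> E `&` vect D = [set 0] ->
  exists P : 'M[R]_n, (forall x, E x -> x *m P = 0) /\ (forall d, vect D d -> d *m P = d).
Proof.
move=> /vsub_rowspace [ME EM] ED; have [MD DM] := vsub_rowspace (vect_vsub D).
have capDE : (MD :&: ME)%MS = 0.
  apply/eqP; rewrite -submx0; apply/row_subP => i; rewrite submx0.
  have : (row i (MD :&: ME)%MS <= MD :&: ME)%MS by apply: row_sub.
  rewrite sub_capmx => /andP [/DM vi /EM ei].
  by have : (E `&` vect D) (row i (MD :&: ME)%MS) by []; rewrite ED => /= ->.
exists (proj_mx MD ME); split => [x /EM|d /DM]; first exact: proj_mx_0.
exact: proj_mx_id.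
Qed.

End RowSpaces.

Section Decompositions.
Variables (R : realType) (n : nat).
Local Notation V := 'rV[R]_n.
Implicit Types (W E D G : set V) (x d : V).

Lemma discrete_setS D1 D2 : D1 `<=` D2 -> discrete_set D2 -> discrete_set D1.
Proof.
move=> D12 dD2 x D1x; have [U [Ux D2U]] := dD2 x (D12 x D1x).
exists U; split => //; apply/seteqP; split => y /=.
  by move=> [/D12 D2y Uy]; have : (D2 `&` U) y by []; rewrite D2U.
by move=> ->; split => //; have : [set x] x by []; rewrite -D2U => -[].
Qed.

Lemma discrete_subgroup_ball D : is_subgroup D -> discrete_set D ->
  exists2 e : R, 0 < e & forall d, D d -> `|d| < e -> d = 0.
Proof.
move=> hD dD; have [U [/nbhs_ballP [e e0 eU] DU]] := dD 0 (subgroup0 hD).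
exists e => // d Dd de.
suff : (D `&` U) d by rewrite DU.
by split => //; apply: eU; rewrite -ball_normE /ball_ /= sub0r normrN.
Qed.

(* The [N.+1]-th part of [d] has norm [|d| / N.+1], eventually below the isolation radius of [0]. *)
Lemma discrete_subgroup_divisible0 D d : is_subgroup D -> discrete_set D -> D d ->
  (forall N : nat, exists dN, D dN /\ dN *+ N.+1 = d) -> d = 0.
Proof.
move=> hD dD Dd ddiv; have [e e0 De0] := discrete_subgroup_ball hD dD.
set N := Num.truncn (`|d| / e); have [dN [DdN dNd]] := ddiv N.
suff dN0 : dN = 0 by rewrite -dNd dN0 mul0rn.
apply: De0 => //.
have := truncnS_gt (`|d| / e); rewrite -/N ltr_pdivrMr // -dNd normrMn -mulr_natr.
have : (0 : R) < N.+1%:R by rewrite ltr0Sn.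
nra.
Qed.

Lemma closed_subgroup_divisible_scale G x :
  is_subgroup G -> closed G ->
  (forall N : nat, exists z, G z /\ z *+ N.+1 = x) -> forall a : R, G (a *: x).
Proof.
move=> hG Gcl xdiv a; apply: Gcl => B /nbhs_ballP [r r0 rB].
set c : R := (Num.truncn (`|x| / r)).+1%:R.
have c0 : 0 < c by rewrite ltr0Sn.
have xrc : `|x| < r * c by rewrite mulrC -ltr_pdivrMr //; apply: truncnS_gt.
have [z [Gz zx]] := xdiv (Num.truncn (`|x| / r)).
set m := Num.floor (a * c).
have /andP [mac acm] := floor_itv (a * c); rewrite intrD in acm.
exists (z *~ m); split; first exact: subgroupMz.
have -> : z *~ m = (m%:~R / c) *: x.
  by rewrite -zx -scaler_nat scalerA mulfVK ?scaler_int // gt_eqF.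
apply: rB; rewrite -ball_normE /ball_ /= -scalerBl normrZ.
set t := a - m%:~R / c.
have tc : t * c = a * c - m%:~R by rewrite /t mulrBl mulfVK // gt_eqF.
have t0 : 0 <= t by rewrite -(pmulr_lge0 _ c0) tc subr_ge0.
rewrite ger0_norm //; have := normr_ge0 x; nra.
Qed.

Section Decomposition.
Variables (G E D : set V).
Hypothesis decG : is_decomp G E D.

Lemma decomp_vsub : is_vsub E. Proof. by case: decG. Qed.
Lemma decomp_subgroupD : is_subgroup D. Proof. by case: decG. Qed.

Lemma decompP y : G y -> exists x d, [/\ E x, D d & y = x + d].
Proof. by case: decG => _ _ _ -> _ [x [d [Ex [Dd ->]]]]; exists x, d. Qed.

Lemma decomp_add x d : E x -> D d -> G (x + d).
Proof. by case: decG => _ _ _ -> _ Ex Dd; exists x, d. Qed.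

Lemma decomp_subE : E `<=` G.
Proof. by move=> x Ex; rewrite -[x]addr0; apply: decomp_add Ex (subgroup0 decomp_subgroupD). Qed.

Lemma decomp_subD : D `<=` G.
Proof. by move=> d Dd; rewrite -[d]add0r; apply: decomp_add (vsub0 decomp_vsub) Dd. Qed.

Lemma decomp_subgroup : is_subgroup G.
Proof.
split; first exact: decomp_subE (vsub0 decomp_vsub).
move=> _ _ /decompP [x [d [Ex Dd ->]]] /decompP [x' [d' [Ex' Dd' ->]]].
rewrite opprD addrACA; apply: decomp_add; first exact: vsubB decomp_vsub Ex Ex'.
exact: subgroupB decomp_subgroupD Dd Dd'.
Qed.

Lemma decomp_uniq x d x' d' : E x -> vect D d -> E x' -> vect D d' ->
  x + d = x' + d' -> x = x' /\ d = d'.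
Proof. by case: decG => hE _ _ _ ED; apply: direct_sum_uniq. Qed.

(* Only the discrete component can obstruct infinite divisibility. *)
Lemma decomp_divisible y : G y ->
  (forall N : nat, exists yN, G yN /\ yN *+ N.+1 = y) -> E y.
Proof.
case: (decG) => hE hD dD _ _ /decompP [x [d [Ex Dd ->]]] ydiv.
suff -> : d = 0 by rewrite addr0.
apply: (discrete_subgroup_divisible0 hD dD Dd) => N.
have [_ [/decompP [x' [d' [Ex' Dd' ->]]] xdN]] := ydiv N.
exists d'; split => //; rewrite mulrnDl in xdN.
have Ex'N : E (x' *+ N.+1) by rewrite -scaler_nat; apply: vsubZ.
have Dd'N : vect D (d' *+ N.+1) by apply: sub_vect; apply: subgroupMn.
by have [] := decomp_uniq Ex'N Dd'N Ex (sub_vect Dd) xdN.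
Qed.

Lemma decomp_vsub_le W : is_vsub W -> W `<=` G -> W `<=` E.
Proof.
move=> hW WG w Ww; apply: decomp_divisible (WG w Ww) _ => N.
exists (N.+1%:R^-1 *: w); split; first by apply: WG; apply: vsubZ.
by rewrite -scaler_nat scalerA mulfV ?scale1r // pnatr_eq0.
Qed.

End Decomposition.

Lemma cdim_p_max G W0 : is_vsub W0 -> W0 `<=` G ->
  (forall W, is_vsub W -> W `<=` G -> W `<=` W0) -> cdim_p G = vdim W0.
Proof.
move=> hW0 W0G W0max; apply: xget_unique.
  by split=> [|W hW WG]; [exists W0 | apply: vdimS => //; apply: W0max].
move=> d [[W [hW WG <-]] dmax]; apply/eqP; rewrite eqn_leq dmax // andbT.
by apply: vdimS => //; apply: W0max.
Qed.

Lemma cdim_p_decomp G E D : is_decomp G E D -> cdim_p G = vdim E.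
Proof.
move=> decG; apply: cdim_p_max (decomp_vsub decG) (decomp_subE decG) _.
by move=> W hW WG; exact: (decomp_vsub_le decG hW WG).
Qed.

End Decompositions.

Section Morphisms.
Variables (R : realType) (n : nat).
Local Notation V := 'rV[R]_n.
Implicit Types (W E D G : set V).

Section AdditiveOn.
Variables (G : set V) (g : V -> V).
Hypotheses (hG : is_subgroup G) (gD : forall a b, G a -> G b -> g (a + b) = g a + g b).

Lemma additive_on0 : g 0 = 0.
Proof.
have := gD (subgroup0 hG) (subgroup0 hG); rewrite addr0 => g00.
by apply: (addrI (g 0)); rewrite addr0 -g00.
Qed.

Lemma additive_onN a : G a -> g (- a) = - g a.
Proof.
move=> Ga; apply/eqP; rewrite -subr_eq0 opprK addrC -gD ?subrr ?additive_on0 //.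
exact: subgroupN.
Qed.

Lemma additive_onB a b : G a -> G b -> g (a - b) = g a - g b.
Proof. by move=> Ga Gb; rewrite gD ?additive_onN //; apply: subgroupN. Qed.

Lemma additive_onMn a m : G a -> g (a *+ m) = g a *+ m.
Proof.
move=> Ga; elim: m => [|m IHm]; first by rewrite !mulr0n additive_on0.
by rewrite !mulrS gD ?IHm //; apply: subgroupMn.
Qed.

Lemma additive_onMz a p : G a -> g (a *~ p) = g a *~ p.
Proof.
move=> Ga; case: p => m; first exact: additive_onMn.
by rewrite !NegzE !mulrNz additive_onN ?additive_onMn //; apply: subgroupMn.
Qed.

Lemma image_subgroup : is_subgroup (g @` G).
Proof.
split; first by exists 0; [apply: subgroup0 | apply: additive_on0].
move=> _ _ [a Ga <-] [b Gb <-]; exists (a - b); first exact: subgroupB.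
exact: additive_onB.
Qed.

End AdditiveOn.

Lemma image_vsub E (g : V -> V) : is_vsub E ->
  (forall (a b : R) x y, E x -> E y -> g (a *: x + b *: y) = a *: g x + b *: g y) ->
  is_vsub (g @` E).
Proof.
move=> hE glin; have g0 : g 0 = 0.
  by have := glin 0 0 0 0 (vsub0 hE) (vsub0 hE); rewrite !scale0r addr0.
split; first by exists 0; [apply: vsub0|].
move=> a _ _ [x Ex <-] [y Ey <-]; exists (a *: x + 1 *: y).
  by apply: vsubD => //; apply: vsubZ.
by rewrite glin // scale1r.
Qed.

Lemma kernel_vsub E (g : V -> V) : is_vsub E ->
  (forall (a b : R) x y, E x -> E y -> g (a *: x + b *: y) = a *: g x + b *: g y) ->
  is_vsub (E `&` [set x | g x = 0]).
Proof.
move=> hE glin; have g0 : g 0 = 0.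
  by have := glin 0 0 0 0 (vsub0 hE) (vsub0 hE); rewrite !scale0r addr0.
split; first by split; [apply: vsub0|].
move=> a x y [Ex /= gx] [Ey /= gy]; split; first by apply: vsubD => //; apply: vsubZ.
by have := glin a 1 _ _ Ex Ey; rewrite !scale1r /= => ->; rewrite gx gy scaler0 addr0.
Qed.

Section IsoCriterion.
Variables (G1 E1 D1 G2 E2 D2 : set V) (g : V -> V).
Hypotheses (decG1 : is_decomp G1 E1 D1) (decG2 : is_decomp G2 E2 D2).
Hypotheses (gD : forall a b, G1 a -> G1 b -> g (a + b) = g a + g b)
  (gZ : forall (l : R) x, E1 x -> g (l *: x) = l *: g x).
Hypotheses (gE : g @` E1 = E2) (gDD : g @` D1 = D2) (ginj : {in G1 &, injective g}).

Let G1sub := decomp_subgroup decG1.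
Let hE1 := decomp_vsub decG1.

Lemma iso_hom_eq (l : R) (p : int) x y : E1 x -> D1 y ->
  g (l *: x + y *~ p) = l *: g x + g y *~ p.
Proof.
move=> Ex Dy; have G1y := decomp_subD decG1 Dy.
have G1lx := decomp_subE decG1 (vsubZ l hE1 Ex).
by rewrite gD ?gZ ?(additive_onMz G1sub gD) //; apply: subgroupMz.
Qed.

Lemma iso_image : g @` G1 = G2.
Proof.
have gsum x d : E1 x -> D1 d -> g (x + d) = g x + g d.
  by move=> Ex Dd; rewrite gD //; [apply: (decomp_subE decG1 Ex) | apply: (decomp_subD decG1 Dd)].
apply/seteqP; split.
  move=> _ [_ /(decompP decG1) [x [d [Ex Dd ->]]] <-]; rewrite gsum //.
  by apply: (decomp_add decG2); [rewrite -gE; exists x | rewrite -gDD; exists d].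
move=> _ /(decompP decG2) [y [e [Ey De ->]]].
rewrite -gE in Ey; rewrite -gDD in De; case: Ey => x Ex <-; case: De => d Dd <-.
by exists (x + d); [apply: (decomp_add decG1 Ex Dd) | apply: gsum].
Qed.

Lemma cag_iso_of_injective : cag_iso G1 E1 D1 G2 E2 D2 g.
Proof.
have G1E : E1 `<=` G1 := decomp_subE decG1.
have G1D : D1 `<=` G1 := decomp_subD decG1.
have glin (a b : R) x y : E1 x -> E1 y -> g (a *: x + b *: y) = a *: g x + b *: g y.
  by move=> Ex Ey; rewrite gD ?gZ //; apply: G1E; apply: vsubZ.
pose h := 'pinv_(fun=> 0) G1 g.
have hK a : G1 a -> h (g a) = a by move=> Ga; apply: (pinvKV _ ginj); apply: mem_set.
split.
  exists g, g; split => //; first by move=> x Ex; rewrite -gE; exists x.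
    by move=> d Dd; rewrite -gDD; exists d.
  by move=> x y Dx Dy; apply: gD; apply: G1D.
  exact: iso_hom_eq.
exists h; split.
- exists h, h; split.
  + by rewrite -gE => _ [x Ex <-]; rewrite hK //; apply: G1E.
  + rewrite -gE => a b _ _ [x Ex <-] [y Ey <-].
    have Eab : E1 (a *: x + b *: y) by apply: (vsubD hE1); apply: (vsubZ _ hE1).
    by rewrite -glin // !hK //; apply: G1E.
  + by rewrite -gDD => _ [d Dd <-]; rewrite hK //; apply: G1D.
  + rewrite -gDD => _ _ [d Dd <-] [d' Dd' <-].
    by rewrite -gD ?hK //; apply: G1D => //; apply: subgroupD (decomp_subgroupD decG1) Dd Dd'.
  + move=> l p; rewrite -gE -gDD => _ _ [x Ex <-] [y Dy <-].
    have G1xy : G1 (l *: x + y *~ p).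
      exact: (decomp_add decG1 (vsubZ l hE1 Ex) (subgroupMz p (decomp_subgroupD decG1) Dy)).
    by rewrite -iso_hom_eq // !hK //; [apply: G1D | apply: G1E].
- by move=> a Ga; rewrite -iso_image; exists a.
- by rewrite -iso_image => _ [a Ga <-]; rewrite hK.
- exact: hK.
- by rewrite -iso_image => _ [a Ga <-]; rewrite hK.
Qed.

End IsoCriterion.

End Morphisms.

Section ClosedGroupHom.
Variables (R : realType) (n : nat).
Local Notation V := 'rV[R]_n.
Variables (H K E D E' D' : set V) (f g1 g2 : V -> V).
Hypotheses (decH : is_decomp H E D) (decK : is_decomp K E' D').
Hypotheses (g1E : forall x, E x -> E' (g1 x))
  (g1lin : forall (a b : R) x y, E x -> E y -> g1 (a *: x + b *: y) = a *: g1 x + b *: g1 y)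
  (g2D : forall y, D y -> D' (g2 y))
  (g2add : forall x y, D x -> D y -> g2 (x + y) = g2 x + g2 y)
  (fdef : forall (l : R) (p : int) x y, E x -> D y ->
     f (l *: x + y *~ p) = l *: g1 x + g2 y *~ p).

Let hE := decomp_vsub decH.
Let hD := decomp_subgroupD decH.
Let hE' := decomp_vsub decK.
Let hD' := decomp_subgroupD decK.
Let dD' : discrete_set D' := let: And5 _ _ d _ _ := decK in d.
Let ED' : E' `&` vect D' = [set 0] := let: And5 _ _ _ _ c := decK in c.

Lemma g1D x y : E x -> E y -> g1 (x + y) = g1 x + g1 y.
Proof. by move=> Ex Ey; have := g1lin 1 1 Ex Ey; rewrite !scale1r. Qed.

Lemma g1Z a x : E x -> g1 (a *: x) = a *: g1 x.
Proof. by move=> Ex; have := g1lin a 0 Ex Ex; rewrite !scale0r !addr0. Qed.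

Lemma f_sum x d : E x -> D d -> f (x + d) = g1 x + g2 d.
Proof. by move=> Ex Dd; have := fdef 1 1 Ex Dd; rewrite !scale1r !mulr1z. Qed.

Lemma f_E x : E x -> f x = g1 x.
Proof.
move=> Ex; have := f_sum Ex (subgroup0 hD).
by rewrite !addr0 (additive_on0 hD g2add) addr0.
Qed.

Lemma f_D d : D d -> f d = g2 d.
Proof.
move=> Dd; have := f_sum (vsub0 hE) Dd.
by rewrite !add0r (additive_on0 (vsub_subgroup hE) g1D) add0r.
Qed.

Lemma fHD a b : H a -> H b -> f (a + b) = f a + f b.
Proof.
move=> /(decompP decH) [x [d [Ex Dd ->]]] /(decompP decH) [x' [d' [Ex' Dd' ->]]].
have Exx' : E (x + x') by apply: vsubD.
have Ddd' : D (d + d') by apply: subgroupD.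
by rewrite addrACA !f_sum // g1D // g2add // addrACA.
Qed.

Lemma f_HK h : H h -> K (f h).
Proof.
move=> /(decompP decH) [x [d [Ex Dd ->]]]; rewrite f_sum //.
exact: (decomp_add decK (g1E Ex) (g2D Dd)).
Qed.

Lemma fH_setsum : f @` H = setsum (g1 @` E) (g2 @` D).
Proof.
apply/seteqP; split=> [_ [_ /(decompP decH) [x [d [Ex Dd ->]]] <-]|].
  by exists (g1 x), (g2 d); rewrite f_sum.
move=> _ [_ [_ [[x Ex <-] [[d Dd <-] ->]]]]; rewrite -f_sum //.
by exists (x + d); first exact: (decomp_add decH Ex Dd).
Qed.

Lemma fH_decomp : is_decomp (f @` H) (g1 @` E) (g2 @` D).
Proof.
split; [exact: image_vsub hE g1lin | exact: image_subgroup hD g2add | | exact: fH_setsum |].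
  by apply: discrete_setS dD' => _ [d Dd <-]; apply: g2D.
apply/seteqP; split=> [v [[x Ex <-] gxD]|v /= ->].
  suff : (E' `&` vect D') (g1 x) by rewrite ED'.
  by split; [apply: g1E | apply: vectS gxD => _ [d Dd <-]; apply: g2D].
split; last exact: vsub0 (vect_vsub _).
by exists 0; [apply: vsub0 | apply: (additive_on0 (vsub_subgroup hE) g1D)].
Qed.

(* Projecting along [E'] onto [vect D'] and using that [D'] is discrete, points of [f @` H]
   close to [e' + d'] have [D']-component exactly [d']. *)
Lemma image_near_component e' d' : E' e' -> D' d' ->
  \forall w \near e' + d', (f @` H) w ->
    exists x d, [/\ E x, D d, g2 d = d' & w = g1 x + d'].
Proof.
move=> Ee De; have [P [PE' PD']] := direct_sum_projector hE' ED'.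
have [r r0 D'r] := discrete_subgroup_ball hD' dD'.
have : nbhs (e' + d') ((fun w : V => w *m P) @^-1` ball ((e' + d') *m P) r).
  exact/mulmx_continuous/nbhsx_ballx.
apply: filterS => w wr [_ /(decompP decH) [x [d [Ex Dd ->]]]].
rewrite f_sum // => wx; rewrite -wx in wr *.
have g2d : g2 d = d'.
  apply/eqP; rewrite eq_sym -subr_eq0; apply/eqP.
  apply: D'r; first exact: subgroupB (g2D Dd).
  move: wr; rewrite -ball_normE /ball_ /= !mulmxDl (PE' _ Ee) (PE' _ (g1E Ex)).
  by rewrite (PD' _ (sub_vect De)) (PD' _ (sub_vect (g2D Dd))) !add0r.
by exists x, d; rewrite g2d.
Qed.

Lemma fH_closed : closed K -> closed (f @` H).
Proof.
move=> Kcl z fHz.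
have /(decompP decK) [e' [d' [Ee De ze]]] : K z.
  by apply: Kcl; apply: closureS fHz => _ [h Hh <-]; apply: f_HK.
have near_z := image_near_component Ee De; rewrite -ze in near_z.
have [w [fHw /(_ fHw) [_ [d0 [_ Dd0 g2d0 _]]]]] := fHz _ near_z.
have : closure (g1 @` E) e'.
  move=> B /nbhs_ballP [eps eps0 epsB].
  have [w' [fHw' [/(_ fHw') [x [_ [Ex _ _ w'x]]] zw']]] :=
    fHz _ (filterI near_z (nbhsx_ballx z eps eps0)).
  exists (g1 x); split; first by exists x.
  apply: epsB; move: zw'; rewrite -ball_normE /ball_ /= w'x ze.
  by rewrite opprD addrACA subrr addr0.
move=> /(vsub_closed (image_vsub hE g1lin)) [x1 Ex1 gx1].
by exists (x1 + d0); [exact: (decomp_add decH Ex1 Dd0) | rewrite f_sum // gx1 g2d0 ze].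
Qed.

Lemma fH_iso : {in H &, injective f} -> cag_iso H E D (f @` H) (g1 @` E) (g2 @` D) f.
Proof.
move=> finj; apply: (cag_iso_of_injective decH fH_decomp fHD) => //.
- by move=> l x Ex; rewrite !f_E ?g1Z //; apply: vsubZ.
- exact: eq_imagel f_E.
- exact: eq_imagel f_D.
Qed.

Lemma cdim_p_ker : cdim_p (kerH H f) = vdim (E `&` [set x | g1 x = 0]).
Proof.
apply: cdim_p_max (kernel_vsub hE g1lin) _ _.
  by move=> x [Ex gx]; split; [exact: (decomp_subE decH Ex) | rewrite /= f_E].
move=> W hW Wker.
have WE : W `<=` E by apply: (decomp_vsub_le decH hW) => y /Wker [].
by move=> w Ww; split; [exact: WE | have [_] := Wker w Ww; rewrite /= f_E //; exact: WE].
Qed.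

Section Surjective.
Hypothesis fHK : f @` H = K.

Lemma E'_image : E' = g1 @` E.
Proof.
apply/seteqP; split=> [e Ee|_ [x Ex <-]]; last exact: g1E.
have : K e by exact: (decomp_subE decK Ee).
rewrite -fHK => -[_ /(decompP decH) [x [d [Ex Dd ->]]]]; rewrite f_sum // => xde.
have := decomp_uniq decK (g1E Ex) (sub_vect (g2D Dd)) Ee (vsub0 (vect_vsub D')).
by rewrite addr0 => /(_ xde) [<- _]; exists x.
Qed.

Lemma cdim_Re_image : cdim_Re K = cdim_Re H - cdim_Re (kerH H f).
Proof.
rewrite /cdim_Re /cdim /= (cdim_p_decomp decK) (cdim_p_decomp decH) cdim_p_ker.
by rewrite (vdim_rank_nullity hE g1lin) E'_image PoszD addrK.
Qed.

Section Supplement.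
Variable F : set V.
Hypotheses (hF : closed_subgroup F) (suppF : supplement_defect0 H f F).

Let Fsub : is_subgroup F := hF.1.
Let FH : F `<=` H := let: And4 s _ _ _ := suppF in s.
Let dD : discrete_set D := let: And5 _ _ d _ _ := decH in d.
Let ED : E `&` vect D = [set 0] := let: And5 _ _ _ _ c := decH in c.
Let fFD a b : F a -> F b -> f (a + b) = f a + f b.
Proof. by move=> Fa Fb; apply: fHD; apply: FH. Qed.

Lemma supplement_onto k : K k -> exists2 a, F a & f a = k.
Proof.
case: suppF => _ FkerH _ _; rewrite -fHK -FkerH => -[_ [a [b [Fa [[Hb fb] ->]]]] <-].
by exists a; rewrite // fHD ?fb ?addr0 //; apply: FH.
Qed.

(* Defect [0] forces [vect (F `&` kerH H f)] to be [0]-dimensional. *)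
Lemma supplement_ker0 a : F a -> f a = 0 -> a = 0.
Proof.
case: suppF => _ _; rewrite /cdim_Re /cdim_Im /cdim /= => ->.
rewrite subr0 /cdim_q; have [M vectM] := vsub_rowspace (vect_vsub (F `&` kerH H f)).
rewrite (vdim_rowspace vectM) => -[/eqP]; rewrite mxrank_eq0 => /eqP M0 Fa fa0.
have : vect (F `&` kerH H f) a by apply: sub_vect; split => //; split => //; apply: FH.
by move/vectM; rewrite M0 submx0 => /eqP.
Qed.

Lemma supplement_inj : {in F &, injective f}.
Proof.
move=> a b /set_mem Fa /set_mem Fb fab; apply/eqP; rewrite -subr_eq0; apply/eqP.
apply: supplement_ker0; first exact: subgroupB.
by rewrite (additive_onB Fsub fFD) // fab subrr.
Qed.

Lemma supplement_divisible y : F y -> E' (f y) ->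
  forall N : nat, exists z, F z /\ z *+ N.+1 = y.
Proof.
move=> Fy Ey N; have [z Fz fz] := supplement_onto (decomp_subE decK (vsubZ N.+1%:R^-1 hE' Ey)).
exists z; split => //; apply: supplement_inj; [apply/mem_set; exact: subgroupMn | exact/mem_set |].
by rewrite (additive_onMn Fsub fFD) // fz -scaler_nat scalerA mulfV ?scale1r ?pnatr_eq0.
Qed.

Lemma supplement_E y : F y -> E' (f y) -> E y.
Proof.
move=> Fy Ey; apply: (decomp_divisible decH (FH Fy)) => N.
by have [z [Fz zy]] := supplement_divisible Fy Ey N; exists z; split => //; apply: FH.
Qed.

Lemma supplementE_vsub : is_vsub (F `&` E).
Proof.
split; first by split; [apply: subgroup0 | apply: vsub0].
move=> a x y [Fx Ex] [Fy Ey]; split; last by apply: vsubD => //; apply: vsubZ.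
apply: subgroupD => //; apply: (closed_subgroup_divisible_scale Fsub hF.2).
by apply: supplement_divisible => //; rewrite f_E //; apply: g1E.
Qed.

Let DF := [set h | F h /\ D' (f h)].

Lemma supplementD_decomp k : DF k -> exists x d, [/\ E x, D d, k = x + d & g1 x = 0].
Proof.
move=> [/FH Hk Dk]; have [x [d [Ex Dd kxd]]] := decompP decH Hk.
exists x, d; split => //; move: Dk; rewrite kxd f_sum // => Dk.
have := decomp_uniq decK (g1E Ex) (sub_vect (g2D Dd)) (vsub0 hE') (sub_vect Dk).
by rewrite add0r => /(_ erefl) [].
Qed.

Lemma supplementD_subgroup : is_subgroup DF.
Proof.
split; first by split; [apply: subgroup0 | rewrite (additive_on0 Fsub fFD); apply: subgroup0].
move=> a b [Fa Da] [Fb Db]; split; first exact: subgroupB.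
by rewrite (additive_onB Fsub fFD) //; apply: subgroupB.
Qed.

(* Two points of [DF] with close projections onto [vect D] along [E] differ by an element
   of [F] with trivial [D]-component, hence of [F `&` kerH H f]. *)
Lemma supplementD_discrete : discrete_set DF.
Proof.
move=> h [Fh Dh]; have [P [PE PD]] := direct_sum_projector hE ED.
have [r r0 Dr] := discrete_subgroup_ball hD dD.
exists ((fun v : V => v *m P) @^-1` ball (h *m P) r); split.
  exact/mulmx_continuous/nbhsx_ballx.
apply/seteqP; split=> [h' /= [[Fh' Dh'] hh']|_ ->]; last by split; [|apply: ballxx].
have /supplementD_decomp [x [d [Ex Dd h'h gx]]] : DF (h' - h).
  by split; [apply: subgroupB | rewrite (additive_onB Fsub fFD) //; apply: subgroupB].
have d0 : d = 0.
  apply: Dr => //; move: hh'; rewrite -ball_normE /ball_ /= -mulmxBl -opprB mulNmx normrN.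
  by rewrite h'h mulmxDl (PE _ Ex) (PD _ (sub_vect Dd)) add0r.
apply/eqP; rewrite -subr_eq0; apply/eqP; apply: supplement_ker0; first exact: subgroupB.
by rewrite h'h d0 addr0 f_E.
Qed.

Lemma supplement_setsum : F = setsum (F `&` E) DF.
Proof.
apply/seteqP; split=> [h Fh|_ [x [k [[Fx _] [[Fk _] ->]]]]]; last exact: subgroupD.
have /(decompP decK) [e' [d' [Ee Dd fh]]] := f_HK (FH Fh).
have [y Fy fy] := supplement_onto (decomp_subE decK Ee).
have Ey : E y by apply: supplement_E => //; rewrite fy.
exists y, (h - y); split=> //; split; last by rewrite addrC subrK.
split; first exact: subgroupB.
by rewrite (additive_onB Fsub fFD) // fh fy addrC addKr.
Qed.

Lemma supplement_cap : (F `&` E) `&` vect DF = [set 0].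
Proof.
pose W := setsum (E `&` [set x | g1 x = 0]) (vect D).
have hW : is_vsub W := setsum_vsub (kernel_vsub hE g1lin) (vect_vsub D).
have DFW : DF `<=` W.
  move=> k /supplementD_decomp [x [d [Ex Dd -> gx]]].
  by exists x, d; split => //; split => //; apply: sub_vect.
apply/seteqP; split=> [v [[Fv Ev] /(vect_min hW DFW) [x [w [[Ex gx] [Dw vxw]]]]]|_ ->].
  have w0 : w = 0.
    suff : (E `&` vect D) w by rewrite ED.
    have wvx : w = v - x by rewrite vxw [x + w]addrC addrK.
    by split => //; rewrite wvx; apply: (vsubB hE).
  by apply: supplement_ker0 => //; rewrite vxw w0 addr0 f_E.
by split; [split; [apply: subgroup0 | apply: vsub0] | apply: vsub0 (vect_vsub _)].
Qed.

Lemma supplement_decomp : is_decomp F (F `&` E) DF.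
Proof.
split; [exact: supplementE_vsub | exact: supplementD_subgroup | exact: supplementD_discrete |
  exact: supplement_setsum | exact: supplement_cap].
Qed.

Lemma supplement_iso : cag_iso F (F `&` E) DF K E' D' f.
Proof.
apply: (cag_iso_of_injective supplement_decomp decK fFD _ _ _ supplement_inj).
- by move=> l x [_ Ex]; rewrite !f_E ?g1Z //; apply: vsubZ.
- apply/seteqP; split=> [_ [x [_ Ex] <-]|e Ee]; first by rewrite f_E //; apply: g1E.
  have [y Fy fy] := supplement_onto (decomp_subE decK Ee).
  by exists y => //; split => //; apply: supplement_E => //; rewrite fy.
- apply/seteqP; split=> [_ [h [_ Dh] <-] //|d Dd].
  have [h Fh fh] := supplement_onto (decomp_subD decK Dd).
  by exists h => //; split => //; rewrite fh.
Qed.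

Lemma supplement_cag_iso : exists EF DF, is_decomp F EF DF /\ cag_iso F EF DF K E' D' f.
Proof. by exists (F `&` E), DF; split; [exact: supplement_decomp | exact: supplement_iso]. Qed.

End Supplement.

End Surjective.

End ClosedGroupHom.

Theorem proposition4p3 (R : realType) (n : nat)
    (H K E D E' D' : set 'rV[R]_n) (f : 'rV[R]_n -> 'rV[R]_n) :
  closed_subgroup H -> closed_subgroup K ->
  is_decomp H E D -> is_decomp K E' D' ->
  cag_hom E D E' D' f ->
  ({in H &, injective f} ->
     closed_subgroup (f @` H) /\
     exists E'' D'', is_decomp (f @` H) E'' D'' /\
                     cag_iso H E D (f @` H) E'' D'' f) /\
  (f @` H = K ->
   forall F : set 'rV[R]_n, closed_subgroup F -> supplement_defect0 H f F ->
     (exists EF DF, is_decomp F EF DF /\ cag_iso F EF DF K E' D' f) /\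
     cdim_Re K = cdim_Re H - cdim_Re (kerH H f)).
Proof.
move=> _ [_ Kcl] decH decK [g1 [g2 [g1E g1lin g2D g2add fdef]]].
have decfH := fH_decomp decH decK g1E g1lin g2D g2add fdef.
split=> [finj | fHK F hF suppF].
  split; first by split; [exact: decomp_subgroup decfH |
    exact: fH_closed decH decK g1E g1lin g2D fdef Kcl].
  exists (g1 @` E), (g2 @` D); split; first exact: decfH.
  exact: fH_iso decH decK g1E g1lin g2D g2add fdef finj.
split; first exact: supplement_cag_iso decH decK g1E g1lin g2D g2add fdef fHK F hF suppF.
exact: cdim_Re_image decH decK g1E g1lin g2D g2add fdef fHK.
Qed.
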